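(* There is a linear-time property $\varphi$ (over a finite alphabet $\Sigma$) such that, for every bound $n\in\mathbb{N}$, every safety automaton $\mathcal{A}$ with $L(\mathcal{A})\subseteq\varphi$ and $L_n(L(\mathcal{A}))=L_n(\varphi)$ has at least $n$ states.
   Context: A linear-time property over $\Sigma$ is a set $\varphi\subseteq\Sigma^\omega$. A lasso of length $n$ is a pair $(u,v)$ with $u\in\Sigma^*$, $v\in\Sigma^+$, $|u\cdot v|=n$, inducing $u\cdot v^\omega$. For $\psi\subseteq\Sigma^\omega$, $L_n(\psi)=\{u\cdot v^\omega \in \psi \mid u\in\Sigma^*, v\in\Sigma^+, |u\cdot v|=n\}$. A (nondeterministic) safety automaton is $(Q,Q_0,\delta)$ with finite state set $Q$, initial states $Q_0\subseteq Q$, and $\delta:Q\times\Sigma\to\mathcal{P}(Q)$; it accepts an infinite word iff there is an infinite run $q_0q_1\cdots$ with $q_0\in Q_0$ and $q_{i+1}\in\delta(q_i,\alpha_{i+1})$ on it. $L(\mathcal{A})$ is the accepted language. *)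

From mathcomp Require Import all_boot.
Set Implicit Arguments. Unset Strict Implicit. Unset Printing Implicit Defensive.

(* Infinite words over Sigma: alpha_1 alpha_2 ... is represented as w 0, w 1, ... *)
Definition word (Sigma : Type) := nat -> Sigma.

Definition ltprop (Sigma : Type) := word Sigma -> Prop.

(* The infinite word u . v^omega, where v = a :: v' is nonempty. *)
Definition lasso_word (Sigma : Type) (u : seq Sigma) (a : Sigma) (v' : seq Sigma)
  : word Sigma :=
  fun i => if i < size u then nth a u i
           else nth a (a :: v') ((i - size u) %% size (a :: v')).

Definition Ln (Sigma : Type) (n : nat) (psi : ltprop Sigma) : ltprop Sigma :=
  fun w => psi w /\
    exists (u : seq Sigma) (a : Sigma) (v' : seq Sigma),
      size u + size (a :: v') = n /\ w = lasso_word u a v'.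

Record safety_automaton (Sigma : finType) := SafetyAutomaton {
  state : finType;
  init : {set state};
  delta : state -> Sigma -> {set state}
}.

Definition accepts (Sigma : finType) (A : safety_automaton Sigma) : ltprop Sigma :=
  fun w => exists q : nat -> state A,
    q 0 \in init A /\ forall i, q i.+1 \in delta (q i) (w i).

From mathcomp Require Import all_boot.
Set Implicit Arguments. Unset Strict Implicit. Unset Printing Implicit Defensive.

(* Take phi = "some letter is true" over bool. For n > 0 the lasso
   false^(n-1) true^omega lies in L_n(phi), so A has a run on it, and the
   first n states of that run are linked by false-transitions. If A had fewer
   than n states, two of them would coincide, and looping between them would
   make A accept false^omega, which is not in phi. *)

Section Pumping.
Variables (Sigma : finType) (A : safety_automaton Sigma) (a : Sigma).
Variables (q : nat -> state A) (i j : nat).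
Hypothesis lt_ij : i < j.
Hypothesis eq_qij : q i = q j.
Hypothesis step_q : forall k, k < j -> q k.+1 \in delta (q k) a.

(* Runs through 0, 1, ..., j-1 and then cycles through i, ..., j-1. *)
Fixpoint loop_index (k : nat) : nat :=
  if k is k'.+1 then
    if (loop_index k').+1 == j then i else (loop_index k').+1
  else 0.

Lemma loop_index_lt k : loop_index k < j.
Proof.
elim: k => [|k IHk] /=; first exact: leq_ltn_trans lt_ij.
by case: eqP => [// | ne_j]; rewrite ltn_neqAle IHk andbT; apply/eqP.
Qed.

Lemma accepts_const_of_repeat : q 0 \in init A -> accepts A (fun _ => a).
Proof.
move=> q0_init; exists (q \o loop_index); split=> // k /=.
case: eqP => [e_j | _]; last exact/step_q/loop_index_lt.
by rewrite eq_qij -{1}e_j; apply/step_q/loop_index_lt.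
Qed.

End Pumping.

Lemma repeat_of_card_le (T : finType) (q : nat -> T) (n : nat) :
  #|T| <= n -> exists i j, [/\ i < j, j <= n & q i = q j].
Proof.
move=> card_le.
have /injectivePn [x [y ne_xy eq_qxy]] : ~~ injectiveb (fun k : 'I_n.+1 => q k).
  apply: contraTN card_le => /injectiveP /leq_card.
  by rewrite card_ord -ltnNge.
have ne_xy' : (x : nat) != y by [].
have le_x := ltn_ord x; have le_y := ltn_ord y.
by case: ltngtP ne_xy' => // [lt_xy | lt_yx] _; [exists x, y | exists y, x].
Qed.

Lemma lasso_word_nseq (Sigma : Type) (n : nat) (a b : Sigma) (k : nat) :
  lasso_word (nseq n a) b [::] k = if k < n then a else b.
Proof. by rewrite /lasso_word size_nseq nth_nseq; case: ltnP; rewrite ?modn1. Qed.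

Definition eventually_true : ltprop bool := fun w => exists k, w k.

Lemma Ln_eventually_true_lasso (n : nat) :
  Ln n.+1 eventually_true (lasso_word (nseq n false) true [::]).
Proof.
split; first by exists n; rewrite lasso_word_nseq ltnn.
by exists (nseq n false), true, [::]; rewrite size_nseq addn1.
Qed.

Theorem theorem4 :
  exists (Sigma : finType) (phi : ltprop Sigma),
    forall (n : nat) (A : safety_automaton Sigma),
      (forall w, accepts A w -> phi w) ->
      (forall w, Ln n (accepts A) w <-> Ln n phi w) ->
      n <= #|state A|.
Proof.
exists (bool : finType), eventually_true => -[// | n] A sub_phi eq_Ln.
have [[q [q0_init step_q]] _] := proj2 (eq_Ln _) (Ln_eventually_true_lasso n).
have step_false k : k < n -> q k.+1 \in delta (q k) false.
  by move=> lt_kn; have := step_q k; rewrite lasso_word_nseq lt_kn.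
rewrite ltnNge; apply/negP => /(repeat_of_card_le q) [i [j [lt_ij le_jn eq_qij]]].
have step_j k : k < j -> q k.+1 \in delta (q k) false.
  by move=> lt_kj; apply/step_false/(leq_trans lt_kj).
by have [] := sub_phi _ (accepts_const_of_repeat lt_ij eq_qij step_j q0_init).
Qed.
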